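(* Let $\mathcal L\subseteq\mathcal A^*$ be a language. (1) For all $n_2\ge n_1$, $\mathfrak s\in\{\ell,r\}$ and $w'\in\mathcal L^{\mathfrak s}_{n_2}$, the word $w=w'_{[1,n_1]}$ (if $\mathfrak s=\ell$), resp. $w=w'_{[n_2-n_1+1,n_2]}$ (if $\mathfrak s=r$), is $\mathfrak s$-special. Assume now in addition that $\mathcal L$ satisfies RBC with constant $n_0$ (every bispecial word of length $\ge n_0$ is regular bispecial). (2) For all $n_2\ge n_1\ge n_0$, $\mathfrak s\in\{\ell,r\}$ and $w\in\mathcal L^{\mathfrak s}_{n_1}$, there is a unique $w'\in\mathcal L^{\mathfrak s}_{n_2}$ with $w=w'_{[1,n_1]}$ if $\mathfrak s=\ell$, resp. $w=w'_{[n_2-n_1+1,n_2]}$ if $\mathfrak s=r$. (3) There is $N$ such that for all $n_2\ge n_1\ge N$ and $\mathfrak s\in\{\ell,r\}$, any $w'\in\mathcal L^{\mathfrak s}_{n_1}$ and $w''\in\mathcal L^{\mathfrak s}_{n_2}$ with $w'_{[1,n_0]}=w''_{[1,n_0]}$ (if $\mathfrak s=\ell$), resp. $w'_{[n_1-n_0+1,n_1]}=w''_{[n_2-n_0+1,n_2]}$ (if $\mathfrak s=r$), satisfy $Ex^{\mathfrak s}(w')=Ex^{\mathfrak s}(w'')$.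
   Context: $\mathcal{A}$ is a finite alphabet, $\mathcal{A}^*$ the set of nonempty finite words, $w_{[i,j]}=w_i\cdots w_j$. A language is a set $\mathcal L\subseteq\mathcal A^*$ with $\mathcal A\subseteq\mathcal L$, closed under taking subwords, and such that for every $w\in\mathcal L$ there are $a,b\in\mathcal A$ with $awb\in\mathcal L$. $\mathcal L_n$ = words of length $n$ in $\mathcal L$. $Ex^\ell(w)=\{a: aw\in\mathcal L\}$, $Ex^r(w)=\{b: wb\in\mathcal L\}$; $w$ is $\ell$-special (left special) if $|Ex^\ell(w)|\ge2$, $r$-special (right special) if $|Ex^r(w)|\ge2$, bispecial if both; $\mathcal L_n^{\mathfrak s}$ is the set of $\mathfrak s$-special words of length $n$. A bispecial $w$ is regular bispecial if there is exactly one $\hat a\in Ex^\ell(w)$ with $\hat aw$ right special and exactly one $\hat b\in Ex^r(w)$ with $w\hat b$ left special. $\mathcal L$ satisfies RBC (regular bispecial condition) if for some $n_0$ every bispecial word of length $\ge n_0$ is regular bispecial. *)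

From mathcomp Require Import all_boot.
Set Implicit Arguments. Unset Strict Implicit. Unset Printing Implicit Defensive.

(* Words over a finite alphabet A are sequences [seq A]; A^* = nonempty ones.
   A language is a predicate L on words. *)
Definition language (A : finType) (L : pred (seq A)) : Prop :=
  [/\ (forall w, L w -> w != [::]),
      (forall a : A, L [:: a]),
      (forall u w, L w -> u != [::] -> infix u w -> L u)
    & (forall w, L w -> exists a b, L (a :: rcons w b))].

Inductive side := SL | SR.

Definition Ex (A : finType) (L : pred (seq A)) (s : side) (w : seq A) : {set A} :=
  match s with
  | SL => [set a | L (a :: w)]
  | SR => [set b | L (rcons w b)]
  end.

Definition special (A : finType) (L : pred (seq A)) (s : side) (w : seq A) : bool :=
  L w && (1 < #|Ex L s w|).

Definition bispecial (A : finType) (L : pred (seq A)) (w : seq A) : bool :=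
  special L SL w && special L SR w.

Definition Lsp (A : finType) (L : pred (seq A)) (s : side) (n : nat) (w : seq A) : bool :=
  (size w == n) && special L s w.

Definition regular_bispecial (A : finType) (L : pred (seq A)) (w : seq A) : bool :=
  [&& bispecial L w,
      #|[set a in Ex L SL w | special L SR (a :: w)]| == 1
    & #|[set b in Ex L SR w | special L SL (rcons w b)]| == 1].

Definition RBC (A : finType) (L : pred (seq A)) (n0 : nat) : Prop :=
  forall w, n0 <= size w -> bispecial L w -> regular_bispecial L w.

Definition restr (A : Type) (s : side) (n : nat) (w : seq A) : seq A :=
  match s with
  | SL => take n w
  | SR => drop (size w - n) w
  end.

(* All statements are made side-generic: [ext s w a] extends w by a letter on
   side s (so Ex L s w = [set a | L (ext s w a)]) and [opp s] is the other side;
   [restr s n w] keeps the n letters of w on side s, i.e. it forgets letters on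
   side [opp s].

   (1) Restriction can only shrink the extension set: every s-extension of w is
       an s-extension of [restr s n w].  Hence restrictions of special words are
       special.
   (2) Under RBC, a special word w of length >= n0 has exactly one extension on
       the opposite side that is still s-special: if w is bispecial this is
       regularity, otherwise w has a unique opposite extension and it inherits
       all s-extensions of w.  Induction on the length difference gives (2).
   (3) By (2), the special words of length >= n0 with a fixed n0-restriction u
       form a chain under restriction, along which the extension sets decrease.
       A nonincreasing nat-valued measure is eventually constant, so for each u
       the extension sets stabilize; as there are finitely many u of length n0,
       a common bound exists. *)

From mathcomp Require Import all_boot zify.
From Stdlib Require Import Classical.
Set Implicit Arguments. Unset Strict Implicit. Unset Printing Implicit Defensive.

Lemma antitone_measure_stabilizes (T : Type) (P : nat -> T -> Prop) (f : T -> nat) :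
  (forall n m x y, n <= m -> P n x -> P m y -> f y <= f x) ->
  exists N, forall n m x y, N <= n -> N <= m -> P n x -> P m y -> f x = f y.
Proof.
move=> anti.
have [[n [x Pnx]] | none] := classic (exists n x, P n x); last first.
  by exists 0 => n m x y _ _ Pnx; case: none; exists n, x.
suff descent : forall k n x, P n x -> f x = k ->
    exists N, forall n1 n2 x1 x2, N <= n1 -> N <= n2 ->
      P n1 x1 -> P n2 x2 -> f x1 = f x2 by exact: descent Pnx erefl.
elim/ltn_ind => k IH {}n {}x {}Pnx fx.
have [[m [y [nm Pmy lt_k]]] | stable] :=
  classic (exists m y, [/\ n <= m, P m y & f y < k]).
  exact: IH lt_k m y Pmy erefl.
have eq_k m y : n <= m -> P m y -> f y = k.
  move=> nm Pmy; apply/eqP; rewrite eqn_leq -{1}fx (anti n m x y) //= leqNgt.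
  by apply/negP => lt_k; apply: stable; exists m, y.
by exists n => n1 n2 x1 x2 N1 N2 P1 P2; rewrite (eq_k n1 x1) ?(eq_k n2 x2).
Qed.

Lemma finite_uniform_bound (T : finType) (P : T -> nat -> Prop) :
  (forall t N N', N <= N' -> P t N -> P t N') ->
  (forall t, exists N, P t N) -> exists N, forall t, P t N.
Proof.
move=> mono bound.
suff [N HN] : exists N, forall t, t \in enum T -> P t N.
  by exists N => t; apply: HN; rewrite mem_enum.
elim: (enum T) => [|t ts [N HN]]; first by exists 0.
have [Nt Ht] := bound t.
exists (maxn N Nt) => x; rewrite in_cons => /predU1P [-> | /HN].
  by apply: mono Ht; rewrite leq_maxr.
by apply: mono; rewrite leq_maxl.
Qed.

Definition opp (s : side) : side := match s with SL => SR | SR => SL end.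

Definition ext (A : Type) (s : side) (w : seq A) (a : A) : seq A :=
  match s with SL => a :: w | SR => rcons w a end.

Section Words.
Variable A : finType.
Implicit Types (w u : seq A) (s : side).

Lemma ExE (L : pred (seq A)) s w : Ex L s w = [set a | L (ext s w a)].
Proof. by case: s. Qed.

Lemma size_ext s w a : size (ext s w a) = (size w).+1.
Proof. by case: s; rewrite /= ?size_rcons. Qed.

Lemma ext_comm s w a b : ext s (ext (opp s) w b) a = ext (opp s) (ext s w a) b.
Proof. by case: s. Qed.

Lemma ext_nil s w a : ext s w a != [::].
Proof. by case: s => //=; case: w. Qed.

Lemma infix_ext s w a : infix w (ext s w a).
Proof. by case: s; [exact: infix_cons | exact: infix_rcons]. Qed.

Lemma size_restr s n w : n <= size w -> size (restr s n w) = n.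
Proof. by case: s => /= le_n; rewrite ?size_takel ?size_drop //; lia. Qed.

Lemma restr_id s n w : size w = n -> restr s n w = w.
Proof. by case: s => /= <-; rewrite ?take_size ?subnn ?drop0. Qed.

Lemma restr_restr s n m w : n <= m -> m <= size w ->
  restr s n (restr s m w) = restr s n w.
Proof.
case: s => /= le_nm le_m; first by rewrite take_takel.
by rewrite size_drop drop_drop; congr drop; lia.
Qed.

Lemma restr_ext_opp s n w c : n <= size w -> restr s n (ext (opp s) w c) = restr s n w.
Proof. by case: s => /= le_n; [rewrite -cats1 takel_cat | rewrite subSn]. Qed.

Lemma restr_decomp s n u : size u = n.+1 -> exists c, u = ext (opp s) (restr s n u) c.
Proof.
case: s => /=.
  case/lastP: u => [//|u x]; rewrite size_rcons => /succn_inj <-; exists x.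
  by rewrite -cats1 take_size_cat // cats1.
by case: u => [//|x u] /= /succn_inj <-; exists x; rewrite subSn // subnn /= drop0.
Qed.

Lemma infix_restr s n w : infix (restr s n w) w.
Proof. by case: s; [exact: infix_take | exact/suffixW/suffix_drop]. Qed.

Lemma infix_ext_restr s n w a : infix (ext s (restr s n w) a) (ext s w a).
Proof.
case: s; first by apply: prefixW; rewrite /= eqxx prefix_take.
by apply: suffixW; rewrite /= suffix_rcons eqxx suffix_drop.
Qed.
End Words.

Section Language.
Variables (A : finType) (L : pred (seq A)).
Hypothesis hL : language L.
Implicit Types (w u : seq A) (s : side).

Lemma L_infix u w : L w -> u != [::] -> infix u w -> L u.
Proof. by case: hL => _ _ subword_closed _; apply: subword_closed. Qed.

Lemma L_extendable s w : L w -> exists a b, L (ext (opp s) (ext s w a) b).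
Proof.
case: hL => _ _ _ ext2 /ext2 [a [b Lw]].
by case: s; [exists a, b | exists b, a]; rewrite //= -rcons_cons.
Qed.

Lemma L_ext_exists s w : L w -> exists c, L (ext s w c).
Proof.
move=> Lw; have [a [b Lab]] := L_extendable s Lw.
by exists a; apply: L_infix Lab (ext_nil _ _ _) (infix_ext _ _ _).
Qed.

Lemma L_ext_opp_exists s w a : L (ext s w a) -> exists c, L (ext (opp s) (ext s w a) c).
Proof.
move=> Lwa; have [b [c Lbc]] := L_extendable (opp s) Lwa.
by exists b; apply: L_infix Lbc (ext_nil _ _ _) (infix_ext _ _ _).
Qed.

Lemma Ex_restr_sub s n w : Ex L s w \subset Ex L s (restr s n w).
Proof.
apply/subsetP => a; rewrite !ExE !inE => Lwa.
exact: L_infix Lwa (ext_nil _ _ _) (infix_ext_restr _ _ _ _).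
Qed.

Lemma special_restr s n w : 0 < n -> n <= size w -> special L s w ->
  special L s (restr s n w).
Proof.
move=> n_gt0 le_n /andP [Lw card_gt1]; apply/andP; split.
  by apply: L_infix Lw _ (infix_restr _ _ _); rewrite -size_eq0 size_restr //; lia.
exact: leq_trans card_gt1 (subset_leq_card (Ex_restr_sub s n w)).
Qed.

Lemma Lsp_restr s n m w : 0 < n -> n <= m -> Lsp L s m w -> Lsp L s n (restr s n w).
Proof.
move=> n_gt0 le_nm /andP [/eqP sz sp].
by rewrite /Lsp size_restr ?sz // eqxx special_restr ?sz.
Qed.

Lemma Ex_opp_single s w c : #|Ex L (opp s) w| <= 1 -> L (ext (opp s) w c) ->
  Ex L (opp s) w = [set c].
Proof.
move=> card_le1 Lwc; apply/eqP; rewrite eq_sym eqEcard sub1set cards1 card_le1.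
by rewrite ExE inE Lwc.
Qed.

Lemma Ex_through_single s w c : #|Ex L (opp s) w| <= 1 -> L (ext (opp s) w c) ->
  Ex L s w \subset Ex L s (ext (opp s) w c).
Proof.
move=> card_le1 Lwc; apply/subsetP => a; rewrite !ExE !inE => Lwa.
have [d Lwad] := L_ext_opp_exists Lwa; rewrite -ext_comm in Lwad.
have : d \in Ex L (opp s) w.
  by rewrite ExE inE; apply: L_infix Lwad (ext_nil _ _ _) (infix_ext _ _ _).
by rewrite (Ex_opp_single card_le1 Lwc) inE => /eqP <-.
Qed.

Lemma regular_bispecial_side s w : regular_bispecial L w ->
  #|[set b in Ex L (opp s) w | special L s (ext (opp s) w b)]| == 1.
Proof. by case: s => /and3P []. Qed.

Lemma unique_special_extension n0 s w : RBC L n0 -> n0 <= size w -> special L s w ->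
  exists b, forall b', special L s (ext (opp s) w b') = (b' == b).
Proof.
move=> rbc le_n0 sp_w; have Lw : L w by case/andP: sp_w.
have [sp_opp | not_sp_opp] := boolP (special L (opp s) w).
  have bisp : bispecial L w by case: s sp_w sp_opp => sp1 sp2; apply/andP.
  have /cards1P [b def_b] := regular_bispecial_side s (rbc w le_n0 bisp).
  exists b => b'; rewrite -in_set1 -def_b inE ExE inE.
  by case: (boolP (special _ _ _)) => [/andP [-> _] | _]; rewrite ?andbF.
have card_le1 : #|Ex L (opp s) w| <= 1 by move: not_sp_opp; rewrite /special Lw -leqNgt.
have [c Lwc] := L_ext_exists (opp s) Lw.
exists c => b'; have [-> | ne] := eqVneq b' c.
  rewrite /special Lwc; case/andP: sp_w => _; move/leq_trans; apply.
  exact: subset_leq_card (Ex_through_single card_le1 Lwc).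
apply/negbTE/negP => /andP [Lwb _].
have : b' \in Ex L (opp s) w by rewrite ExE inE.
by rewrite (Ex_opp_single card_le1 Lwc) inE (negbTE ne).
Qed.

Variable n0 : nat.
Hypothesis n0_gt0 : 0 < n0.
Hypothesis rbc : RBC L n0.

Lemma special_extension_unique s k n1 w : n0 <= n1 -> Lsp L s n1 w ->
  exists! w', Lsp L s (n1 + k) w' /\ restr s n1 w' = w.
Proof.
move=> le_n0 Lsp_w; have sz_w : size w = n1 by case/andP: Lsp_w => /eqP.
elim: k => [|k [v [[/andP [/eqP sz_v sp_v] restr_v] uniq_v]]].
  exists w; split; first by rewrite addn0 restr_id.
  by move=> w' [/andP [/eqP sz' _] <-]; rewrite restr_id // sz' addn0.
have long_v : n0 <= size v by rewrite sz_v; lia.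
have [b sp_ext] := unique_special_extension rbc long_v sp_v.
exists (ext (opp s) v b); split.
  by rewrite /Lsp size_ext sz_v addnS eqxx sp_ext eqxx restr_ext_opp // sz_v leq_addr.
move=> u [/andP [/eqP sz_u sp_u] restr_u].
have def_v : v = restr s (n1 + k) u.
  apply: uniq_v; split; last by rewrite restr_restr ?leq_addr ?sz_u ?addnS.
  apply: (Lsp_restr _ (leqnSn _)); first lia.
  by rewrite /Lsp sz_u -addnS eqxx.
have [c def_u] := restr_decomp s (etrans sz_u (addnS n1 k)).
by move: sp_u; rewrite def_u -def_v sp_ext => /eqP ->.
Qed.

Lemma special_chain s n m w w' : n0 <= n -> n <= m -> Lsp L s n w -> Lsp L s m w' ->
  restr s n0 w = restr s n0 w' -> restr s n w' = w.
Proof.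
move=> le_n0 le_nm Lsp_w Lsp_w' same_root.
have sz_w : size w = n by case/andP: Lsp_w => /eqP.
have sz_w' : size w' = m by case/andP: Lsp_w' => /eqP.
have [v [_ uniq_v]] := special_extension_unique (n - n0) (leqnn n0)
                         (Lsp_restr n0_gt0 le_n0 Lsp_w).
rewrite subnKC // in uniq_v.
have cut_w' : Lsp L s n (restr s n w') /\ restr s n0 (restr s n w') = restr s n0 w.
  by split; [apply: Lsp_restr Lsp_w'; lia | rewrite restr_restr ?sz_w'].
by rewrite -(uniq_v w) // (uniq_v _ cut_w').
Qed.

Lemma Ex_chain_sub s n m w w' : n0 <= n -> n <= m -> Lsp L s n w -> Lsp L s m w' ->
  restr s n0 w = restr s n0 w' -> Ex L s w' \subset Ex L s w.
Proof. by move=> *; rewrite -(@special_chain s n m w w') //; apply: Ex_restr_sub. Qed.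

Definition Ex_stable_from s (u : seq A) (N : nat) : Prop :=
  forall n1 n2 w' w'', N <= n1 -> n1 <= n2 -> Lsp L s n1 w' -> Lsp L s n2 w'' ->
    restr s n0 w' = u -> restr s n0 w'' = u -> Ex L s w' = Ex L s w''.

Lemma Ex_stabilizes s u : exists N, Ex_stable_from s u N.
Proof.
pose P n w := [/\ n0 <= n, Lsp L s n w & restr s n0 w = u].
have [N stable] := @antitone_measure_stabilizes _ P (fun w => #|Ex L s w|)
  (fun n m w w' le_nm '(And3 le_n0 Lsp_w root_w) '(And3 _ Lsp_w' root_w') =>
     subset_leq_card (Ex_chain_sub le_n0 le_nm Lsp_w Lsp_w' (etrans root_w (esym root_w')))).
exists (maxn n0 N) => n1 n2 w' w'' le_N le_n12 Lsp_w' Lsp_w'' root_w' root_w''.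
have [le_n0 le_N'] : n0 <= n1 /\ N <= n1 by split; lia.
have sub : Ex L s w'' \subset Ex L s w'.
  by apply: Ex_chain_sub le_n0 le_n12 Lsp_w' Lsp_w'' _; rewrite root_w' root_w''.
have same_card : #|Ex L s w'| = #|Ex L s w''|.
  apply: (stable n1 n2) => //; first exact: leq_trans le_N' le_n12.
  by split; [exact: leq_trans le_n0 le_n12 | |].
by apply/esym/eqP; rewrite eqEcard sub same_card leqnn.
Qed.

Lemma Ex_stabilizes_side s : exists N, forall n1 n2 w' w'', N <= n1 -> n1 <= n2 ->
  Lsp L s n1 w' -> Lsp L s n2 w'' -> restr s n0 w' = restr s n0 w'' ->
  Ex L s w' = Ex L s w''.
Proof.
have [N stable] := @finite_uniform_bound (n0.-tuple A)
  (fun t => Ex_stable_from s (val t))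
  (fun t N N' le_N st n1 n2 w' w'' le_N' => st n1 n2 w' w'' (leq_trans le_N le_N'))
  (fun t => Ex_stabilizes s (val t)).
exists (maxn n0 N) => n1 n2 w' w'' le_N le_n12 Lsp_w' Lsp_w'' same_root.
have sz_root : size (restr s n0 w') == n0.
  by rewrite size_restr //; case/andP: Lsp_w' => /eqP ->; lia.
by apply: (stable (Tuple sz_root) n1 n2) => //; lia.
Qed.
End Language.

Theorem mainTheorem2 (A : finType) (L : pred (seq A)) (hL : language L) :
  (* (1) *)
  (forall (n1 n2 : nat) (s : side) (w' : seq A),
      0 < n1 -> n1 <= n2 -> Lsp L s n2 w' -> special L s (restr s n1 w'))
  /\
  (forall n0 : nat, 0 < n0 -> RBC L n0 ->
     (* (2) *)
     (forall (n1 n2 : nat) (s : side) (w : seq A),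
        n0 <= n1 -> n1 <= n2 -> Lsp L s n1 w ->
        exists! w' : seq A, Lsp L s n2 w' /\ restr s n1 w' = w)
     /\
     (* (3) *)
     (exists N : nat, forall (n1 n2 : nat) (s : side) (w' w'' : seq A),
        N <= n1 -> n1 <= n2 -> Lsp L s n1 w' -> Lsp L s n2 w'' ->
        restr s n0 w' = restr s n0 w'' -> Ex L s w' = Ex L s w'')).
Proof.
split.
  move=> n1 n2 s w' n1_gt0 le_n12 Lsp_w'.
  by case/andP: (Lsp_restr hL n1_gt0 le_n12 Lsp_w').
move=> n0 n0_gt0 rbc; split.
  move=> n1 n2 s w le_n0 le_n12 Lsp_w.
  have := special_extension_unique hL n0_gt0 rbc (n2 - n1) le_n0 Lsp_w.
  by rewrite subnKC.
have [NL stableL] := Ex_stabilizes_side hL n0_gt0 rbc SL.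
have [NR stableR] := Ex_stabilizes_side hL n0_gt0 rbc SR.
exists (maxn NL NR) => n1 n2 s w' w'' le_N.
by case: s; [apply: stableL | apply: stableR]; apply: leq_trans le_N; rewrite ?leq_maxl ?leq_maxr.
Qed.
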